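(* Let $m,n\ge 2$ and let $W$ be a channel from $\{1,\dots,m\}$ to $\{1,\dots,n\}$. Let $g=\max_{1\le j\le n}(\mathbf{1}W)_j$ and $\alpha_j=\min_{1\le i\le m}W_{i,j}$. Then \[ \underline{P}_W(1)=(g-m+1)_+\quad\text{and}\quad \overline{P}_W(1)=\sum_{j=1}^n\alpha_j. \]
   Context: A channel is a row-stochastic matrix; $\mathcal{D}$ is the set of deterministic (0-1) channels from $\{1,\dots,m\}$ to $\{1,\dots,n\}$, $\mathrm{rank}(D)$ the matrix rank. $\Lambda(W)=\{\lambda\text{ probability distribution on }\mathcal{D}: W=\sum_D\lambda_DD\}$. $P_\lambda(r)=\lambda(\{D:\mathrm{rank}(D)=r\})$, $\underline{P}_W(r)=\min_{\lambda\in\Lambda(W)}P_\lambda(r)$, $\overline{P}_W(r)=\max_{\lambda\in\Lambda(W)}P_\lambda(r)$. $\mathbf{1}$ is the all-one row vector of length $m$ ($\mathbf{1}W$ = column sums), and $(x)_+=\max(x,0)$. *)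

From HB Require Import structures.
From mathcomp Require Import all_boot all_order all_algebra.
Set Implicit Arguments. Unset Strict Implicit. Unset Printing Implicit Defensive.
Import Order.TTheory GRing.Theory Num.Theory.
Local Open Scope ring_scope.

Definition channel (R : realFieldType) (m n : nat) (W : 'M[R]_(m, n)) : Prop :=
  (forall i j, 0 <= W i j) /\ (forall i, \sum_(j < n) W i j = 1).

Definition detmx (R : realFieldType) (m n : nat) (f : {ffun 'I_m -> 'I_n})
  : 'M[R]_(m, n) := \matrix_(i < m, j < n) (f i == j)%:R.

Definition prob_on_det (R : realFieldType) (m n : nat)
  (lam : {ffun {ffun 'I_m -> 'I_n} -> R}) : Prop :=
  (forall f, 0 <= lam f) /\ \sum_f lam f = 1.

Definition in_Lambda (R : realFieldType) (m n : nat) (W : 'M[R]_(m, n))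
  (lam : {ffun {ffun 'I_m -> 'I_n} -> R}) : Prop :=
  prob_on_det lam /\ W = \sum_f lam f *: detmx R f.

Definition P_lam (R : realFieldType) (m n : nat)
  (lam : {ffun {ffun 'I_m -> 'I_n} -> R}) (r : nat) : R :=
  \sum_(f | \rank (detmx R f) == r) lam f.

Definition is_minP (R : realFieldType) (m n : nat) (W : 'M[R]_(m, n))
  (r : nat) (v : R) : Prop :=
  (exists lam, in_Lambda W lam /\ P_lam lam r = v) /\
  (forall lam, in_Lambda W lam -> v <= P_lam lam r).

Definition is_maxP (R : realFieldType) (m n : nat) (W : 'M[R]_(m, n))
  (r : nat) (v : R) : Prop :=
  (exists lam, in_Lambda W lam /\ P_lam lam r = v) /\
  (forall lam, in_Lambda W lam -> P_lam lam r <= v).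

(* g = max_j (1 W)_j  (column sums are >= 0, so the default 0 is harmless) *)
Definition max_colsum (R : realFieldType) (m n : nat) (W : 'M[R]_(m, n)) : R :=
  \big[Num.max/0]_(j < n) \sum_(i < m) W i j.

(* alpha_j = min_i W_{i,j}  (entries are <= 1, so the default 1 is harmless) *)
Definition col_min (R : realFieldType) (m n : nat) (W : 'M[R]_(m, n)) (j : 'I_n) : R :=
  \big[Num.min/1]_(i < m) W i j.

Definition pos_part (R : realFieldType) (x : R) : R := Num.max x 0.

From HB Require Import structures.
From mathcomp Require Import all_boot all_order all_algebra.
From mathcomp Require Import ring lra zify.
Set Implicit Arguments. Unset Strict Implicit. Unset Printing Implicit Defensive.
Import Order.TTheory GRing.Theory Num.Theory.
Local Open Scope ring_scope.

(* A deterministic channel has rank one iff it is a constant map, so P_lam(1)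
   is the weight lam gives to the constant maps cst j.  Since cst j sends every
   row to column j, that weight is at most every entry of column j, and since
   any other map sends at most m - 1 rows to column j, the column sum of W is
   at most (m - 1) + lam (cst j); this gives both bounds.  For attainment,
   subtract the constant part (alpha_j, resp. (g - m + 1)_+ on a heaviest
   column) from W.  The remainder V has row sums s and column sums at most
   (m - 1) s, and every such V is a nonnegative combination of non-constant
   maps: repeatedly subtract the largest multiple of a non-constant map inside
   the support of V that keeps these constraints, until either an entry
   vanishes (the support shrinks) or a column sum reaches (m - 1) s, a case
   with an explicit decomposition. *)

Lemma ltr_sum_exists (R : realDomainType) (I : finType) (P : pred I) (F G : I -> R) :
  \sum_(i | P i) F i < \sum_(i | P i) G i -> exists2 i, P i & F i < G i.
Proof.
move=> lt_sum; apply/exists_inP; apply: contraTT lt_sum => /exists_inPn ge_FG.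
by rewrite -leNgt; apply: ler_sum => i /ge_FG; rewrite -leNgt.
Qed.

Lemma ler_sum_term (R : numDomainType) (I : finType) (P : pred I) (F : I -> R) i :
  (forall j, P j -> 0 <= F j) -> P i -> F i <= \sum_(j | P j) F j.
Proof.
by move=> F_ge0 P_i; rewrite (bigD1 i) //= lerDl sumr_ge0 // => j /andP [/F_ge0].
Qed.

Section DeterministicChannels.
Variables (R : realFieldType) (m n : nat).
Implicit Types (f : {ffun 'I_m -> 'I_n}) (mu lam : {ffun {ffun 'I_m -> 'I_n} -> R}).
Implicit Types (V : 'M[R]_(m, n)) (s t : R).

Definition cst (j : 'I_n) : {ffun 'I_m -> 'I_n} := [ffun=> j].

Lemma cst_inj : (0 < m)%N -> injective cst.
Proof. by move=> m_gt0 j k /ffunP /(_ (Ordinal m_gt0)); rewrite !ffunE. Qed.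

Lemma rank_detmx_eq1 f : (0 < m)%N ->
  (\rank (detmx R f) == 1%N) = [exists j, f == cst j].
Proof.
move=> m_gt0; pose i0 : 'I_m := Ordinal m_gt0.
apply/eqP/existsP => [rank1 | [j /eqP ->]].
  exists (f i0); apply/eqP/ffunP => i; rewrite ffunE; apply/eqP; apply: contraT => f_i_neq.
  pose r (k : 'I_2) := if k == 0 then i else i0.
  have r_inj : injective (f \o r).
    move=> [[|[|k]] ?] [[|[|k']] ?] //= => [_|/eqP|/eqP|_]; try exact: val_inj.
      by rewrite (negbTE f_i_neq).
    by rewrite eq_sym (negbTE f_i_neq).
  have := @mulmx1_min_rank R 2 _ _ (detmx R f) (rowsub r 1%:M) (colsub (f \o r) 1%:M).
  rewrite rank1 mul_rowsub_mx mul1mx mulmx_colsub mulmx1; apply.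
  by apply/matrixP => k k'; rewrite !mxE (inj_eq r_inj).
have -> : detmx R (cst j) = const_mx 1 *m (\row_k (j == k)%:R : 'rV[R]_n).
  by apply/matrixP => i k; rewrite !mxE big_ord1 !mxE ffunE mul1r.
apply/eqP; rewrite eqn_leq mulmx_max_rank lt0n mxrank_eq0.
apply/eqP => /matrixP/(_ i0 j)/eqP.
by rewrite !mxE big_ord1 !mxE eqxx mul1r oner_eq0.
Qed.

Lemma P_lam1E lam : (0 < m)%N -> P_lam lam 1 = \sum_j lam (cst j).
Proof.
move=> m_gt0; rewrite /P_lam.
rewrite -[RHS](big_imset lam (in2W (cst_inj m_gt0))) /=.
apply: eq_bigl => f; rewrite rank_detmx_eq1 //.
by apply/existsP/imsetP => [[j /eqP ->]|[j _ ->]]; exists j.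
Qed.

Definition colsum V j := \sum_i V i j.

Definition mixture mu : 'M[R]_(m, n) := \sum_f mu f *: detmx R f.

Lemma mixtureE mu i j : mixture mu i j = \sum_(f : {ffun 'I_m -> 'I_n} | f i == j) mu f.
Proof.
rewrite summxE [RHS]big_mkcond; apply: eq_bigr => f _.
by rewrite !mxE; case: eqP => _; rewrite ?mulr1 ?mulr0.
Qed.

Lemma mixture_rowsum mu i : \sum_j mixture mu i j = \sum_f mu f.
Proof.
rewrite [RHS](partition_big (fun f : {ffun 'I_m -> 'I_n} => f i) xpredT) //=.
by apply: eq_bigr => j _; rewrite mixtureE.
Qed.

Lemma mixture_colsum mu j :
  colsum (mixture mu) j = \sum_f mu f *+ #|[set i | f i == j]|.
Proof.
rewrite /colsum; under eq_bigr => i _ do rewrite mixtureE.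
rewrite (exchange_big_dep xpredT) //=; apply: eq_bigr => f _.
by rewrite -sumr_const; apply: eq_bigl => i; rewrite inE.
Qed.

Lemma card_fiber_le f j :
  f != cst j -> #|[set i | f i == j]|%:R <= m%:R - 1 :> R.
Proof.
move=> f_ne; rewrite lerBrDr natr1 ler_nat -[m in (_ <= m)%N]card_ord.
apply: proper_card; apply/properP; split; first exact: subset_predT.
have [i f_i_ne] : exists i, f i != j.
  apply/existsP; apply: contraR f_ne => /existsPn f_j.
  by apply/eqP/ffunP => i; rewrite ffunE; apply/eqP/negPn.
by exists i; rewrite ?inE.
Qed.

Lemma rowsum_sub_detmx V t f i :
  \sum_j (V - t *: detmx R f) i j = \sum_j V i j - t.
Proof.
under eq_bigr do rewrite !mxE.
rewrite sumrB; congr (_ - _).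
rewrite (bigD1 (f i)) //= eqxx mulr1 big1 ?addr0 // => j /negbTE.
by rewrite eq_sym => ->; rewrite mulr0.
Qed.

Lemma colsum_le_entry V s i j : (forall i j, 0 <= V i j) ->
  (forall i, \sum_j V i j = s) -> colsum V j <= (m%:R - 1) * s + V i j.
Proof.
move=> V_ge0 V_row.
have : s - V i j <= \sum_k (s - V k j).
  apply: ler_sum_term => // k _; rewrite subr_ge0 -(V_row k).
  by apply: ler_sum_term => // j' _; exact: V_ge0.
by rewrite sumrB sumr_const card_ord -mulr_natl /colsum; lra.
Qed.

Lemma card_cst_fiber k j : #|[set i | cst k i == j]| = if k == j then m else 0%N.
Proof.
case: eqP => [<-|ne_k].
  by rewrite -[in RHS](card_ord m); apply: eq_card => i; rewrite !inE ffunE eqxx.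
by apply/eqP; rewrite cards_eq0; apply/eqP/setP => i; rewrite !inE ffunE; exact/eqP.
Qed.

Lemma colsum_total V s :
  (forall i, \sum_j V i j = s) -> \sum_j colsum V j = m%:R * s.
Proof.
move=> V_row; rewrite exchange_big /= (eq_bigr _ (fun i _ => V_row i)).
by rewrite sumr_const card_ord mulr_natl.
Qed.

Lemma colsum_sub_detmx V t f j :
  colsum (V - t *: detmx R f) j = colsum V j - t * #|[set i | f i == j]|%:R.
Proof.
rewrite /colsum -sumr_const [X in t * X]big_mkcond mulr_sumr -sumrB.
apply: eq_bigr => i _.
by rewrite !mxE inE; case: eqP; rewrite ?mulr1 ?mulr0.
Qed.

Definition cst_but (j0 : 'I_n) (i0 : 'I_m) (j : 'I_n) : {ffun 'I_m -> 'I_n} :=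
  [ffun i => if i == i0 then j else j0].

(* When column j0 is tight the deficits s - V i j0 add up to s, so the rows can
   take turns leaving j0: row i0 goes to j with weight V i0 j while all other
   rows stay in j0. *)
Lemma tight_col_decomposition V s j0 :
  (forall i, \sum_j V i j = s) -> colsum V j0 = (m%:R - 1) * s ->
  V = \sum_i0 \sum_(j | j != j0) V i0 j *: detmx R (cst_but j0 i0 j).
Proof.
move=> V_row V_tight.
have off_j0 i0 : \sum_(j | j != j0) V i0 j = s - V i0 j0.
  by rewrite -(V_row i0) [in RHS](bigD1 j0) //= addrC addrK.
apply/matrixP => i k.
have entry i0 j : (V i0 j *: detmx R (cst_but j0 i0 j)) i k =
    V i0 j * ((if i == i0 then j else j0) == k)%:R by rewrite !mxE ffunE.
rewrite summxE (bigD1 i) //= summxE.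
rewrite (eq_bigr (fun j => V i j * (j == k)%:R)) => [|j _]; last by rewrite entry eqxx.
rewrite (eq_bigr (fun i0 => (j0 == k)%:R * (s - V i0 j0))) => [|i0 ne_i0]; last first.
  rewrite summxE -off_j0 mulr_sumr; apply: eq_bigr => j _.
  by rewrite entry [i == i0]eq_sym (negbTE ne_i0) mulrC.
have [<-|ne_k] := eqVneq j0 k; last first.
  rewrite [X in _ + X]big1 => [|i0 _]; last by rewrite mul0r.
  rewrite addr0 (bigD1 k) 1?eq_sym //= eqxx mulr1 big1 ?addr0 // => j /andP [_].
  by move/negbTE ->; rewrite mulr0.
rewrite big1 => [|j /negbTE ->]; last by rewrite mulr0.
rewrite add0r; under eq_bigr do rewrite mul1r.
have : \sum_i0 (s - V i0 j0) = s.
  by rewrite sumrB sumr_const card_ord -mulr_natl -[\sum_i0 _]/(colsum V j0) V_tight; ring.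
rewrite (bigD1 i) //=; lra.
Qed.

End DeterministicChannels.

Section NonconstantMixtures.
Variables (R : realFieldType) (m n : nat).
Hypothesis m_gt1 : (1 < m)%N.
Implicit Types (f : {ffun 'I_m -> 'I_n}) (V : 'M[R]_(m, n)) (s t : R).

Definition nonconst_mixture V := exists mu : {ffun {ffun 'I_m -> 'I_n} -> R},
  [/\ forall f, 0 <= mu f, forall j, mu (cst m j) = 0 & V = mixture mu].

Lemma nonconst_mixture0 : nonconst_mixture 0.
Proof.
exists [ffun=> 0]; split=> [f|j|]; rewrite ?ffunE //.
by rewrite /mixture big1 // => f _; rewrite ffunE scale0r.
Qed.

Lemma nonconst_mixtureD V1 V2 :
  nonconst_mixture V1 -> nonconst_mixture V2 -> nonconst_mixture (V1 + V2).
Proof.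
move=> [mu1 [mu1_ge0 mu1_cst ->]] [mu2 [mu2_ge0 mu2_cst ->]].
exists [ffun f => mu1 f + mu2 f].
split=> [f|j|]; rewrite ?ffunE ?addr_ge0 ?mu1_cst ?mu2_cst ?addr0 //.
by rewrite /mixture -big_split; apply: eq_bigr => f _; rewrite ffunE scalerDl.
Qed.

Lemma nonconst_mixture_sum (I : finType) (P : pred I) (F : I -> 'M[R]_(m, n)) :
  (forall k, P k -> nonconst_mixture (F k)) -> nonconst_mixture (\sum_(k | P k) F k).
Proof. exact: (big_ind nonconst_mixture nonconst_mixture0 nonconst_mixtureD). Qed.

Lemma nonconst_mixture_det t f :
  0 <= t -> (forall j, f != cst m j) -> nonconst_mixture (t *: detmx R f).
Proof.
move=> t_ge0 f_ncst; exists [ffun g => if g == f then t else 0].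
split=> [g|j|]; rewrite ?ffunE; first by case: eqP.
  by rewrite eq_sym (negbTE (f_ncst j)).
rewrite /mixture (bigD1 f) //= ffunE eqxx big1 ?addr0 // => g /negbTE g_ne.
by rewrite ffunE g_ne scale0r.
Qed.

Lemma exists_neq (i0 : 'I_m) : exists i, i != i0.
Proof.
have [->|ne] := eqVneq i0 (Ordinal (ltnW m_gt1)); first by exists (Ordinal m_gt1).
by exists (Ordinal (ltnW m_gt1)); rewrite eq_sym.
Qed.

Lemma cst_but_nonconst (j0 : 'I_n) (i0 : 'I_m) j k :
  j != j0 -> cst_but j0 i0 j != cst m k.
Proof.
move=> ne_j; apply/eqP => /ffunP eq_k; have [i ne_i] := exists_neq i0.
move: (eq_k i) (eq_k i0); rewrite !ffunE eqxx (negbTE ne_i) => <- eq_j.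
by rewrite eq_j eqxx in ne_j.
Qed.

Lemma tight_nonconst_mixture V s j0 :
  (forall i j, 0 <= V i j) -> (forall i, \sum_j V i j = s) ->
  colsum V j0 = (m%:R - 1) * s -> nonconst_mixture V.
Proof.
move=> V_ge0 V_row V_tight; rewrite (tight_col_decomposition V_row V_tight).
apply: nonconst_mixture_sum => i0 _; apply: nonconst_mixture_sum => j ne_j.
by apply: nonconst_mixture_det => // k; exact: cst_but_nonconst.
Qed.

Definition admissible V s :=
  [/\ forall i j, 0 <= V i j, forall i, \sum_j V i j = s
     & forall j, colsum V j <= (m%:R - 1) * s].

Definition nnz V := #|[set ij : 'I_m * 'I_n | V ij.1 ij.2 != 0]|.

Lemma exists_nonconst_support V s : admissible V s -> 0 < s ->
  exists f : {ffun 'I_m -> 'I_n}, (forall i, 0 < V i (f i)) /\ (forall j, f != cst m j).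
Proof.
move=> [V_ge0 V_row V_col] s_gt0.
have [g g_pos] : exists g : {ffun 'I_m -> 'I_n}, forall i, 0 < V i (g i).
  have row_pos i : exists j, 0 < V i j.
    have [j _ V_pos] : exists2 j, true & 0 < V i j.
      by apply: ltr_sum_exists; rewrite sumr_const mul0rn V_row.
    by exists j.
  have [g0 g0_pos] := fin_all_exists row_pos.
  by exists (finfun g0) => i; rewrite ffunE.
set j := g (Ordinal (ltnW m_gt1)).
have [/forallP g_j | /forallPn [i g_i_ne]] := boolP [forall i, g i == j]; last first.
  exists g; split => // k; apply/eqP => /ffunP g_k.
  by move: g_i_ne; rewrite /j !g_k !ffunE eqxx.
have [i1 _ lt_i1] : exists2 i1, true & V i1 j < s.
  apply: ltr_sum_exists; rewrite sumr_const card_ord -mulr_natl.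
  have := V_col j; rewrite /colsum; lra.
have [j1 ne_j1 pos_j1] : exists2 j1, j1 != j & 0 < V i1 j1.
  apply: ltr_sum_exists; rewrite sumr_const mul0rn.
  have := V_row i1; rewrite (bigD1 j) //=; lra.
exists [ffun i => if i == i1 then j1 else g i]; split=> [i|k]; rewrite ?ffunE.
  by case: eqP => [->|].
apply/eqP => /ffunP f_k; have [i2 ne_i2] := exists_neq i1.
move: (f_k i1) (f_k i2); rewrite !ffunE eqxx (negbTE ne_i2) (eqP (g_j i2)) => <- eq_j.
by rewrite eq_j eqxx in ne_j1.
Qed.

Lemma nnz_sub_detmx_lt V t f i :
  (forall i, 0 < V i (f i)) -> t = V i (f i) -> (nnz (V - t *: detmx R f) < nnz V)%N.
Proof.
move=> f_pos t_eq; apply: proper_card; apply/properP; split.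
  apply/subsetP => -[i' j']; rewrite !inE /= !mxE; apply: contra => /eqP V_0.
  case: (f i' =P j') => [f_i'|_]; last by rewrite V_0 mulr0 subr0.
  by move: (f_pos i'); rewrite f_i' V_0 ltxx.
exists (i, f i); rewrite !inE /=; first by rewrite gt_eqF.
by rewrite !mxE eqxx mulr1 -t_eq subrr eqxx.
Qed.

Lemma peel_step V s f : admissible V s ->
  (forall i, 0 < V i (f i)) -> (forall j, f != cst m j) ->
  exists t, [/\ 0 <= t, admissible (V - t *: detmx R f) (s - t)
    & (nnz (V - t *: detmx R f) < nnz V)%N \/
      exists j, colsum (V - t *: detmx R f) j = (m%:R - 1) * (s - t)].
Proof.
move=> [V_ge0 V_row V_col] f_pos f_ncst.
pose k j : R := #|[set i | f i == j]|%:R.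
(* The largest admissible step t is capped by the entries V i (f i) and by the
   slack of every column that f hits fewer than m - 1 times. *)
pose P (x : 'I_m + 'I_n) := if x is inr j then k j < m%:R - 1 else true.
pose F (x : 'I_m + 'I_n) := match x with
  | inl i => V i (f i)
  | inr j => ((m%:R - 1) * s - colsum V j) / (m%:R - 1 - k j) end.
have [x0 P_x0 t_min] := arg_minP F (isT : P (inl (Ordinal (ltnW m_gt1)))).
set t := F x0 in t_min *.
have t_row i : t <= V i (f i) := t_min (inl i) isT.
have t_col j : k j < m%:R - 1 -> t * (m%:R - 1 - k j) <= (m%:R - 1) * s - colsum V j.
  by move=> lt_kj; rewrite -ler_pdivlMr ?subr_gt0 //; exact: t_min (inr j) lt_kj.
have t_attained : (exists i, t = V i (f i)) \/
    exists2 j, k j < m%:R - 1 & t * (m%:R - 1 - k j) = (m%:R - 1) * s - colsum V j.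
  rewrite /t; case: x0 P_x0 {t_min t_row t_col t} => [i _|j lt_kj] /=; first by left; exists i.
  by right; exists j => //; rewrite divfK // subr_eq0 gt_eqF.
have t_ge0 : 0 <= t.
  case: t_attained => [[i ->]|[j lt_kj t_eq]]; first exact: ltW.
  have d_gt0 : 0 < m%:R - 1 - k j by rewrite subr_gt0.
  by rewrite -(pmulr_lge0 _ d_gt0) t_eq subr_ge0.
clearbody t; exists t; split=> //.
  split=> [i j|i|j].
  - by rewrite !mxE; case: eqP => [<-|_]; rewrite ?mulr1 ?subr_ge0 ?mulr0 ?subr0.
  - by rewrite rowsum_sub_detmx V_row.
  - rewrite colsum_sub_detmx -/(k j).
    have [lt_kj|ge_kj] := ltrP (k j) (m%:R - 1); first by have := t_col j lt_kj; lra.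
    have -> : k j = m%:R - 1 by apply/eqP; rewrite eq_le ge_kj card_fiber_le.
    by have := V_col j; lra.
case: t_attained => [[i t_eq]|[j _ t_eq]]; [left | right].
  exact: nnz_sub_detmx_lt f_pos t_eq.
by exists j; rewrite colsum_sub_detmx -/(k j); lra.
Qed.

Lemma admissible_nonconst_mixture V s : admissible V s -> nonconst_mixture V.
Proof.
have [N] := ubnP (nnz V); elim: N V s => // N IH V s lt_N adm.
have [V_ge0 V_row _] := adm.
have [s_le0|s_gt0] := lerP s 0.
  suff -> : V = 0 by exact: nonconst_mixture0.
  apply/matrixP => i j; rewrite mxE; apply/eqP; rewrite eq_le V_ge0 andbT.
  by apply: le_trans s_le0; rewrite -(V_row i) (bigD1 j) //= lerDl sumr_ge0.
have [f [f_pos f_ncst]] := exists_nonconst_support adm s_gt0.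
have [t [t_ge0 adm' progress]] := peel_step adm f_pos f_ncst.
suff : nonconst_mixture (V - t *: detmx R f).
  rewrite -{2}(subrK (t *: detmx R f) V) => /nonconst_mixtureD; apply.
  exact: nonconst_mixture_det.
case: progress => [lt_nnz|[j tight]]; first by apply: (IH _ (s - t)) => //; lia.
by have [V'_ge0 V'_row _] := adm'; exact: tight_nonconst_mixture V'_ge0 V'_row tight.
Qed.

End NonconstantMixtures.

Section ChannelBounds.
Variables (R : realFieldType) (m n : nat).
Hypothesis m_gt1 : (1 < m)%N.
Implicit Types (W V : 'M[R]_(m, n)) (mu lam : {ffun {ffun 'I_m -> 'I_n} -> R}).

Lemma sum_cst_detmxE (a : 'I_n -> R) i k :
  (\sum_j a j *: detmx R (cst m j)) i k = a k.
Proof.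
rewrite summxE (bigD1 k) //= !mxE ffunE eqxx mulr1 big1 ?addr0 // => j /negbTE ne_j.
by rewrite !mxE ffunE ne_j mulr0.
Qed.

Lemma mixture_add_cst mu (a : 'I_n -> R) :
  mixture [ffun f => mu f + \sum_j a j * (f == cst m j)%:R] =
  mixture mu + \sum_j a j *: detmx R (cst m j).
Proof.
rewrite /mixture; under eq_bigr do rewrite ffunE scalerDl.
rewrite big_split /=; congr (_ + _).
under eq_bigr do rewrite scaler_suml.
rewrite exchange_big /=; apply: eq_bigr => j _.
rewrite (bigD1 (cst m j)) //= eqxx mulr1 big1 ?addr0 // => f /negbTE ->.
by rewrite mulr0 scale0r.
Qed.

Lemma in_Lambda_nonconst_mixture W V (a : 'I_n -> R) : channel W ->
  (forall j, 0 <= a j) -> nonconst_mixture V -> (forall i j, W i j = V i j + a j) ->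
  exists lam, in_Lambda W lam /\ P_lam lam 1 = \sum_j a j.
Proof.
move=> [_ W_row] a_ge0 [mu [mu_ge0 mu_cst V_mu]] W_Va.
pose lam := [ffun f => mu f + \sum_j a j * (f == cst m j)%:R].
have lam_cst j : lam (cst m j) = a j.
  rewrite ffunE mu_cst add0r (bigD1 j) //= eqxx mulr1 big1 ?addr0 // => k ne_k.
  by rewrite (inj_eq (cst_inj (ltnW m_gt1))) eq_sym (negbTE ne_k) mulr0.
have W_lam : W = mixture lam.
  by rewrite mixture_add_cst -V_mu; apply/matrixP => i j; rewrite W_Va !mxE sum_cst_detmxE.
exists lam; split; last by rewrite P_lam1E ?(ltnW m_gt1) //; apply: eq_bigr => j _.
split=> //; split=> [f|].
  by rewrite ffunE addr_ge0 ?sumr_ge0 // => j _; rewrite mulr_ge0 ?ler0n.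
by rewrite -(mixture_rowsum _ (Ordinal (ltnW m_gt1))) -W_lam W_row.
Qed.

Lemma cst_weight_le_entry W lam i j : in_Lambda W lam -> lam (cst m j) <= W i j.
Proof.
move=> [[lam_ge0 _] ->]; rewrite (mixtureE lam).
by rewrite (bigD1 (cst m j)) ?ffunE //= lerDl sumr_ge0.
Qed.

Lemma colsum_le_cst_weight W lam j :
  in_Lambda W lam -> colsum W j <= m%:R - 1 + lam (cst m j).
Proof.
move=> [[lam_ge0 lam_sum] ->]; rewrite (mixture_colsum lam).
apply: (@le_trans _ _ (\sum_f (lam f * (m%:R - 1) + lam f * (f == cst m j)%:R))).
  apply: ler_sum => f _; have [->|ne_f] := eqVneq f (cst m j).
    by rewrite mulr1 -[_ *+ _]mulr_natr card_cst_fiber eqxx; lra.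
  by rewrite mulr0 addr0 -[lam f *+ _]mulr_natr ler_wpM2l ?card_fiber_le.
rewrite big_split /= -mulr_suml lam_sum mul1r lerD2l.
by rewrite (bigD1 (cst m j)) //= eqxx mulr1 big1 ?addr0 // => f /negbTE ->; rewrite mulr0.
Qed.

Lemma admissible_sub_heaviest_col W js t : channel W ->
  (forall j, colsum W j <= colsum W js) -> t = pos_part (colsum W js - m%:R + 1) ->
  admissible (W - t *: detmx R (cst m js)) (1 - t).
Proof.
move=> [W_ge0 W_row] le_g t_def; set g := colsum W js in le_g t_def.
have t_ge : g - m%:R + 1 <= t by rewrite t_def le_max lexx.
split=> [i j|i|j].
- rewrite !mxE ffunE; case: (js =P j) => [<-|_]; last by rewrite mulr0 subr0.
  rewrite mulr1 subr_ge0 t_def ge_max W_ge0 andbT.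
  by have := colsum_le_entry i js W_ge0 W_row; rewrite -/g; lra.
- by rewrite rowsum_sub_detmx W_row.
rewrite colsum_sub_detmx card_cst_fiber.
have [<-|ne_j] := eqVneq js j; first by rewrite -/g; lra.
rewrite mulr0 subr0.
have c_j_ge0 : 0 <= colsum W j by apply: sumr_ge0 => i _.
have two_cols : colsum W j + g <= m%:R.
  rewrite -(mulr1 m%:R) -(colsum_total W_row) (bigD1 js) //= addrC lerD2r.
  by apply: ler_sum_term; [move=> k _; exact: sumr_ge0 | rewrite eq_sym].
have [t0|t_pos] : t = 0 \/ t = g - m%:R + 1.
    by rewrite t_def /pos_part; case: lerP; [left | right].
  by rewrite t0 subr0 mulr1; have := le_g j; lra.
have : 0 <= (m%:R - 2) * (m%:R - g) by rewrite mulr_ge0 ?subr_ge0 ?(ler_nat R 2 m) //; lra.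
by rewrite t_pos; lra.
Qed.

Lemma is_minP_rank1 W : (0 < n)%N -> channel W ->
  is_minP W 1 (pos_part (max_colsum W - m%:R + 1)).
Proof.
move=> n_gt0 W_ch; have [W_ge0 W_row] := W_ch.
have [js _ g_js] := @eq_bigmax _ R _ 0 (Ordinal n_gt0) xpredT (colsum W) isT
  (fun j _ => sumr_ge0 _ (fun i _ => W_ge0 i j)).
have le_g j : colsum W j <= max_colsum W := @le_bigmax _ R _ 0 (colsum W) j.
rewrite -[max_colsum W]/(\big[Num.max/0]_j colsum W j) g_js in le_g *.
set t := pos_part _; split.
  have a_ge0 j : 0 <= t * (js == j)%:R by rewrite mulr_ge0 ?ler0n ?le_max ?lexx ?orbT.
  have W_Va i j : W i j = (W - t *: detmx R (cst m js)) i j + t * (js == j)%:R.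
    by rewrite !mxE ffunE subrK.
  have adm := admissible_sub_heaviest_col W_ch le_g (erefl t).
  have [lam [W_lam P_lam_t]] := in_Lambda_nonconst_mixture W_ch a_ge0
    (admissible_nonconst_mixture m_gt1 adm) W_Va.
  exists lam; split=> //; rewrite P_lam_t (bigD1 js) //= eqxx mulr1 big1 ?addr0 // => j.
  by rewrite eq_sym => /negbTE ->; rewrite mulr0.
move=> lam W_lam; have [[lam_ge0 _] _] := W_lam.
rewrite P_lam1E ?(ltnW m_gt1) // ge_max sumr_ge0 ?andbT => [|j _]; last exact: lam_ge0.
have := colsum_le_cst_weight js W_lam.
have := @ler_sum_term _ _ xpredT (fun j => lam (cst m j)) js (fun j _ => lam_ge0 _) isT.
lra.
Qed.

Lemma is_maxP_rank1 W : channel W -> is_maxP W 1 (\sum_j col_min W j).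
Proof.
move=> [W_ge0 W_row].
have W_le1 i j : W i j <= 1 by rewrite -(W_row i); apply: ler_sum_term.
split; last first.
  move=> lam W_lam; rewrite P_lam1E ?(ltnW m_gt1) //; apply: ler_sum => j _.
  have [[lam_ge0 lam_sum] _] := W_lam.
  apply: le_bigmin => [|i _]; last exact: cst_weight_le_entry.
  by rewrite -lam_sum; apply: ler_sum_term.
pose V := \matrix_(i, j) (W i j - col_min W j).
have adm : admissible V (1 - \sum_j col_min W j).
  have V_ge0 i j : 0 <= V i j by rewrite mxE subr_ge0; exact: bigmin_le.
  have V_row i : \sum_j V i j = 1 - \sum_j col_min W j.
    by under eq_bigr do rewrite mxE; rewrite sumrB W_row.
  split=> // j.
  have [i _ min_i] := @eq_bigmin _ R _ 1 (Ordinal (ltnW m_gt1)) xpredT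
    (fun i => W i j) isT (fun i _ => W_le1 i j).
  have := colsum_le_entry i j V_ge0 V_row.
  by rewrite mxE -[col_min W j]/(\big[Num.min/1]_i W i j) min_i subrr addr0.
have col_min_ge0 j : 0 <= col_min W j by apply: le_bigmin.
have W_Va i j : W i j = V i j + col_min W j by rewrite mxE subrK.
have [lam [W_lam P_lam_a]] := in_Lambda_nonconst_mixture (conj W_ge0 W_row) col_min_ge0
  (admissible_nonconst_mixture m_gt1 adm) W_Va.
by exists lam.
Qed.

End ChannelBounds.

Theorem proposition7 (R : realFieldType) (m n : nat)
  (hm : (2 <= m)%N) (hn : (2 <= n)%N) (W : 'M[R]_(m, n)) (hW : channel W) :
  is_minP W 1 (pos_part (max_colsum W - m%:R + 1)) /\
  is_maxP W 1 (\sum_(j < n) col_min W j).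
Proof. by split; [apply: is_minP_rank1 => //; exact: ltnW | exact: is_maxP_rank1]. Qed.
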